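(* The class of finite tournaments has the Rank Property: for every countable ordinal $\alpha$ there is a countable tournament $X$ with $\mathsf{rk}(X)=\alpha$.
   Context: A tournament is a structure $(T,\to)$ with a binary relation $\to$ such that for any two distinct $u,v$ exactly one of $u\to v$, $v\to u$ holds (and no loops). Let $\mathcal F$ be the class of finite tournaments; countable tournaments are the structures considered. Substructures are induced sub-tournaments, $\mathsf{age}(X)$ is the set of finite sub-tournaments of $X$. For $A\le B$, $B$ is a prime extension of $A$ if $|B\setminus A|=1$; a realization of $B$ in $X$ (where $A\le X$) is $C\le X$ with $A\le C$ and an isomorphism $B\to C$ fixing $A$ pointwise. For $F\in\mathsf{age}(X)$ define by recursion: $\mathsf{rk}_X(F)\ge0$ always; $\mathsf{rk}_X(F)\ge\alpha+1$ iff every prime extension $B\in\mathcal F$ of $F$ has a realization $C$ in $X$ with $\mathsf{rk}_X(C)\ge\alpha$; for limit $\alpha$, $\mathsf{rk}_X(F)\ge\alpha$ iff $\mathsf{rk}_X(F)\ge\beta$ for all $\beta<\alpha$. $\mathsf{rk}_X(F)=\sup\{\alpha:\mathsf{rk}_X(F)\ge\alpha\}$ (or $\infty$ if this holds for all ordinals), and $\mathsf{rk}(X)=\mathsf{rk}_X(\emptyset)$. *)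

From Stdlib Require Import List.
Import ListNotations.

Record tournament : Type := Tournament {
  tv : Type;
  tarr : tv -> tv -> Prop;
  tarr_asym : forall u v, tarr u v -> ~ tarr v u;
  tarr_total : forall u v, u <> v -> tarr u v \/ tarr v u
}.

Definition finite_tournament (B : tournament) : Prop :=
  exists l : list (tv B), forall b, In b l.

Definition countable_tournament (X : tournament) : Prop :=
  exists f : tv X -> nat, forall x y, f x = f y -> x = y.

(** A finite substructure F of X (an element of age(X)) is represented by a
    list of vertices of X: F is the induced sub-tournament on {x | In x F}. *)

Definition is_prime_ext (X : tournament) (F : list (tv X))
    (B : tournament) (e : tv X -> tv B) : Prop :=
  finite_tournament B /\
  (forall x y, In x F -> In y F -> e x = e y -> x = y) /\
  (forall x y, In x F -> In y F -> (tarr X x y <-> tarr B (e x) (e y))) /\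
  exists b0, (forall x, In x F -> e x <> b0) /\
             (forall b, b <> b0 -> exists x, In x F /\ e x = b).

Definition realized_with (X : tournament) (F : list (tv X))
    (B : tournament) (e : tv X -> tv B) (P : list (tv X) -> Prop) : Prop :=
  exists g : tv B -> tv X,
    (forall b b', g b = g b' -> b = b') /\
    (forall b b', tarr B b b' <-> tarr X (g b) (g b')) /\
    (forall x, In x F -> g (e x) = x) /\
    exists C : list (tv X), (forall y, In y C <-> exists b, g b = y) /\ P C.

(** Ordinals are presented as (elements of) well-ordered types: the element
    w of W stands for the order type of {v | v < w}. *)
Record wellorder : Type := WellOrder {
  wo : Type;
  wlt : wo -> wo -> Prop;
  wlt_irrefl : forall x, ~ wlt x x;
  wlt_trans : forall x y z, wlt x y -> wlt y z -> wlt x z;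
  wlt_total : forall x y, wlt x y \/ x = y \/ wlt y x;
  wlt_wf : well_founded wlt
}.

Definition countable_wellorder (W : wellorder) : Prop :=
  exists f : wo W -> nat, forall x y, f x = f y -> x = y.

(** The recursion defining rk_X(F) >= w:
    - w = 0 (no predecessor): always;
    - w = v + 1 (v immediate predecessor): every prime extension B of F has
      a realization C in X with rk_X(C) >= v;
    - w limit: rk_X(F) >= v for every v < w. *)
Definition rkge_body (X : tournament) (W : wellorder) (w : wo W)
    (rec : forall v : wo W, wlt W v w -> list (tv X) -> Prop)
    (F : list (tv X)) : Prop :=
  (forall v, ~ wlt W v w) \/
  (exists v (h : wlt W v w),
      (forall u, wlt W u w -> u = v \/ wlt W u v) /\
      forall (B : tournament) (e : tv X -> tv B),
        is_prime_ext X F B e -> realized_with X F B e (rec v h)) \/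
  ((exists v, wlt W v w) /\
   (forall v, wlt W v w -> exists u, wlt W v u /\ wlt W u w) /\
   (forall v (h : wlt W v w), rec v h F)).

(** rkge X W w F  :=  rk_X(F) >= (the ordinal represented by w). *)
Definition rkge (X : tournament) (W : wellorder) : wo W -> list (tv X) -> Prop :=
  Fix (wlt_wf W) (fun _ => list (tv X) -> Prop) (rkge_body X W).

(** rk(X) = rk_X(emptyset) equals the ordinal represented by a, measured in a
    scale W that extends beyond a: rk(X) >= a and rk(X) >= b fails for every
    b > a (so the sup is exactly a, and not infinity). *)
Definition rank_is (X : tournament) (W : wellorder) (a : wo W) : Prop :=
  rkge X W a [] /\ forall b, wlt W a b -> ~ rkge X W b [].

(* For a <= 1 the tournament with a vertices has rank a.  For a >= 2 the
   vertices live on a tree: they are the nonempty sequences of entries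
   (z, l, phi) whose labels l decrease strictly from a and stay >= 2, except
   that a last entry may be an unlabelled leaf.  Siblings, and with them their
   whole subtrees, are ordered lexicographically by their entries, and a vertex
   decides its arrow to each of its ancestors by a bit of phi.
   If F is the chain of ancestors of a node of label l, every one-point type
   over F is realized by a child of any label below l with suitable bits, so
   rk(F) >= l; over a leaf, a sibling realizes any type, giving rank >= 1.
   Conversely, for a chain F with top d, rk(F) is at most the label of d plus
   the number of prefixes of d missing from F; and if F branches at p, rk(F) is
   at most the number of prefixes of p missing from F, because a realizer of the
   cyclic type over the two branches must be one of them. *)

From Stdlib Require Import List Lia ZArith Wf_nat Cantor.
From Stdlib Require Import Classical ClassicalEpsilon ProofIrrelevance FunctionalExtensionality.
Import ListNotations.

Section Ordinals.
Variable W : wellorder.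
Notation wlt := (wlt W).

Definition wle (u w : wo W) := wlt u w \/ u = w.
Definition is_min (w : wo W) := forall v, ~ wlt v w.
Definition is_pred (v w : wo W) := wlt v w /\ forall u, wlt u w -> u = v \/ wlt u v.
Definition is_limit (w : wo W) :=
  (exists v, wlt v w) /\ forall v, wlt v w -> exists u, wlt v u /\ wlt u w.
Definition two_le (v : wo W) := exists u1 u2, wlt u1 u2 /\ wlt u2 v.

Lemma wlt_asym u v : wlt u v -> ~ wlt v u.
Proof. intros H H'. exact (wlt_irrefl W u (wlt_trans W _ _ _ H H')). Qed.

Lemma wlt_wle_trans x y z : wlt x y -> wle y z -> wlt x z.
Proof. intros H [H'|<-]; [exact (wlt_trans W _ _ _ H H')|exact H]. Qed.

Lemma wlt_not_wle u w : wlt u w -> ~ wle w u.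
Proof. intros H [H'|<-]; [exact (wlt_asym _ _ H H')|exact (wlt_irrefl W _ H)]. Qed.

Lemma min_wle w c : is_min w -> wle w c.
Proof.
  intro H. destruct (wlt_total W w c) as [E|[E|E]]; [left|right|]; auto.
  exfalso; exact (H c E).
Qed.

Lemma min_pred_limit w : is_min w \/ (exists v, is_pred v w) \/ is_limit w.
Proof.
  destruct (classic (exists v, wlt v w)) as [[v0 Hv0]|Hn].
  - destruct (classic (exists v, is_pred v w)) as [Hp|Hnp]; [tauto|].
    right; right. split; [eauto|].
    intros v Hv. apply NNPP. intro Hno. apply Hnp. exists v. split; auto.
    intros u Hu. destruct (wlt_total W u v) as [H1|[H1|H1]]; auto.
    exfalso; eauto.
  - left. intros v Hv; eauto.
Qed.

(* [le_plus b k w] says w <= b + k, where [None] stands for the ordinal 0. *)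
Fixpoint le_plus (b : option (wo W)) (k : nat) (w : wo W) : Prop :=
  match k with
  | 0 => match b with Some c => wle w c | None => is_min w end
  | S k => forall u, wlt u w -> le_plus b k u
  end.

Lemma le_plus_down b k w x : le_plus b k w -> wlt x w -> le_plus b k x.
Proof.
  destruct k as [|k]; simpl; intros H Hx.
  - destruct b as [c|].
    + left. exact (wlt_wle_trans _ _ _ Hx H).
    + exfalso. exact (H x Hx).
  - intros u Hu. exact (H u (wlt_trans W _ _ _ Hu Hx)).
Qed.

Lemma le_plus_min b k w : is_min w -> le_plus b k w.
Proof.
  intro H. destruct k as [|k]; simpl.
  - destruct b as [c|]; [apply min_wle|]; exact H.
  - intros u Hu. exfalso. exact (H u Hu).
Qed.

Lemma le_plus_limit b k w : is_limit w -> (forall v, wlt v w -> le_plus b k v) -> le_plus b k w.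
Proof.
  intros [[v0 Hv0] Hl] H. destruct k as [|k]; simpl.
  - destruct (Hl v0 Hv0) as [u [Hu1 Hu2]].
    destruct b as [c|].
    + destruct (wlt_total W w c) as [E|[E|E]]; [left; auto|right; auto|].
      destruct (Hl c E) as [u' [Hu1' Hu2']].
      exfalso. exact (wlt_not_wle _ _ Hu1' (H u' Hu2')).
    + exfalso. exact (H u Hu2 v0 Hu1).
  - intros x Hx. destruct (Hl x Hx) as [u [Hu1 Hu2]]. exact (H u Hu2 x Hu1).
Qed.

Lemma le_plus_succ b k v w : le_plus b k v -> is_pred v w -> le_plus b (S k) w.
Proof.
  intros H [_ Hp] u Hu. destruct (Hp u Hu) as [<-|E]; [exact H|].
  exact (le_plus_down _ _ _ _ H E).
Qed.

Lemma le_plus_mono b k k' w : k <= k' -> le_plus b k w -> le_plus b k' w.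
Proof.
  induction 1 as [|k' _ IH]; [easy|].
  intros H u Hu. exact (le_plus_down _ _ _ _ (IH H) Hu).
Qed.

Lemma le_plus_zero_base u k w : le_plus None k w -> le_plus (Some u) k w.
Proof.
  revert w. induction k as [|k IH]; simpl; intros w H.
  - exact (min_wle _ _ H).
  - intros x Hx. exact (IH x (H x Hx)).
Qed.

(* u < c gives u + 1 <= c, hence u + (1 + k) <= c + k. *)
Lemma le_plus_lt_base u c k w : wlt u c -> le_plus (Some u) (S k) w -> le_plus (Some c) k w.
Proof.
  intro Huc. revert w. induction k as [|k IH]; intros w H.
  - simpl in *. destruct (wlt_total W w c) as [E|[E|E]]; [left|right|]; auto.
    exfalso. exact (wlt_not_wle _ _ Huc (H c E)).
  - intros x Hx. exact (IH x (H x Hx)).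
Qed.

Lemma le_plus_pred_lt_base u c k v w :
  wlt u c -> le_plus (Some u) k v -> is_pred v w -> le_plus (Some c) k w.
Proof.
  intros Huc H Hp. apply (le_plus_lt_base u); [exact Huc|]. exact (le_plus_succ _ _ _ _ H Hp).
Qed.

Lemma le_plus_pred_two_le c k v w :
  two_le c -> le_plus None (S k) v -> is_pred v w -> le_plus (Some c) k w.
Proof.
  intros [u1 [u2 [H12 H2c]]] H Hp.
  apply (le_plus_pred_lt_base u2 c k v w H2c); [|exact Hp].
  apply (le_plus_lt_base u1); [exact H12|]. exact (le_plus_zero_base _ _ _ H).
Qed.

Lemma le_plus_one v : ~ two_le v -> le_plus None 1 v.
Proof. intros Hn x Hx y Hy. apply Hn. exists y, x. auto. Qed.

End Ordinals.

Lemma rkge_unfold (X : tournament) (W : wellorder) (w : wo W) (F : list (tv X)) :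
  rkge X W w F <-> rkge_body X W w (fun v _ => rkge X W v) F.
Proof.
  unfold rkge at 1. rewrite Fix_eq; [reflexivity|].
  intros x f g H.
  replace f with g; [reflexivity|].
  apply functional_extensionality_dep; intro y.
  apply functional_extensionality_dep; intro p. symmetry; apply H.
Qed.

Section RankBounds.
Variable X : tournament.
Variable W : wellorder.

(* Prime extensions of F are described by one-point types: predicates t
   telling which vertices of F the new vertex beats. *)
Definition realizes (F : list (tv X)) (t : tv X -> Prop) (x : tv X) :=
  ~ In x F /\ forall y, In y F -> (tarr X x y <-> t y).

Definition same_set (F G : list (tv X)) := forall y, In y F <-> In y G.

Fixpoint members (F : list (tv X)) : list {y : tv X | In y F} :=
  match F as F0 return list {y : tv X | In y F0} with
  | [] => []
  | y :: F' => exist (fun z => In z (y :: F')) y (or_introl eq_refl)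
       :: map (fun s : {z : tv X | In z F'} =>
                 exist (fun z => In z (y :: F')) (proj1_sig s) (or_intror (proj2_sig s)))
              (members F')
  end.

Lemma members_complete F (s : {y : tv X | In y F}) : In s (members F).
Proof.
  induction F as [|y F IH]; destruct s as [z h]; simpl in *.
  - destruct h.
  - destruct h as [<-|h].
    + left; reflexivity.
    + right. apply in_map_iff. exists (exist _ z h). split; auto.
Qed.

Section TypeExtension.
Variable F : list (tv X).
Variable t : tv X -> Prop.

Definition type_ext_arr (b b' : option {y : tv X | In y F}) : Prop :=
  match b, b' with
  | None, None => False
  | None, Some y => t (proj1_sig y)
  | Some y, None => ~ t (proj1_sig y)
  | Some y, Some y' => tarr X (proj1_sig y) (proj1_sig y')
  end.

Lemma type_ext_arr_asym u v : type_ext_arr u v -> ~ type_ext_arr v u.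
Proof. destruct u as [u|], v as [v|]; simpl; auto. apply tarr_asym. Qed.

Lemma type_ext_arr_total u v : u <> v -> type_ext_arr u v \/ type_ext_arr v u.
Proof.
  destruct u as [[u hu]|], v as [[v hv]|]; simpl; intro Hne.
  - apply tarr_total. intros <-. apply Hne. rewrite (proof_irrelevance _ hu hv). reflexivity.
  - destruct (classic (t u)); tauto.
  - destruct (classic (t v)); tauto.
  - contradiction.
Qed.

Definition type_ext : tournament :=
  Tournament (option {y : tv X | In y F}) type_ext_arr type_ext_arr_asym type_ext_arr_total.

Definition type_ext_emb (y : tv X) : tv type_ext :=
  match excluded_middle_informative (In y F) with
  | left h => Some (exist _ y h)
  | right _ => None
  end.

Lemma type_ext_emb_in y (h : In y F) : type_ext_emb y = Some (exist _ y h).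
Proof.
  unfold type_ext_emb.
  destruct (excluded_middle_informative (In y F)) as [h'|h']; [|contradiction].
  do 2 f_equal; apply proof_irrelevance.
Qed.

Lemma type_ext_prime : is_prime_ext X F type_ext type_ext_emb.
Proof.
  split; [|split; [|split]].
  - exists (None :: map Some (members F)). intros [b|]; simpl; auto.
    right. apply in_map. apply members_complete.
  - intros x y hx hy E. rewrite (type_ext_emb_in x hx), (type_ext_emb_in y hy) in E.
    injection E; auto.
  - intros x y hx hy. rewrite (type_ext_emb_in x hx), (type_ext_emb_in y hy). reflexivity.
  - exists None. split.
    + intros x hx. rewrite (type_ext_emb_in x hx). discriminate.
    + intros [[y h]|] Hb; [|contradiction].
      exists y. split; [exact h|]. apply type_ext_emb_in.
Qed.

Lemma realization_realizes P :
  realized_with X F type_ext type_ext_emb P ->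
  exists x C, realizes F t x /\ same_set C (x :: F) /\ P C.
Proof.
  intros [g [ginj [giso [gfix [C [HC HP]]]]]].
  exists (g None), C. split; [split|split; [|exact HP]].
  - intro hx. assert (E : g (type_ext_emb (g None)) = g None) by (apply gfix; exact hx).
    apply ginj in E. rewrite (type_ext_emb_in _ hx) in E. discriminate.
  - intros y hy. rewrite <- (gfix y hy) at 1. rewrite <- giso, (type_ext_emb_in y hy).
    reflexivity.
  - intro y. rewrite HC. split.
    + intros [[[z hz]|] <-]; [right|left; reflexivity].
      rewrite <- (type_ext_emb_in z hz), (gfix z hz). exact hz.
    + intros [<-|hy]; [exists None; reflexivity|].
      exists (type_ext_emb y). apply gfix; exact hy.
Qed.
End TypeExtension.

Section Upper.
Variable Up : wo W -> list (tv X) -> Prop.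
Hypothesis Up_same_set : forall w F G, same_set F G -> Up w F -> Up w G.
Hypothesis Up_min : forall w F, is_min W w -> Up w F.
Hypothesis Up_limit : forall w F, is_limit W w -> (forall v, wlt W v w -> Up v F) -> Up w F.
Hypothesis Up_step : forall F, exists t : tv X -> Prop,
  forall w v x, is_pred W v w -> realizes F t x -> Up v (x :: F) -> Up w F.

Lemma rkge_upper_bound w F : rkge X W w F -> Up w F.
Proof.
  revert F. induction w as [w IH] using (well_founded_ind (wlt_wf W)).
  intros F H. apply rkge_unfold in H.
  destruct H as [H|[[v [h [Hpred H]]]|[Hex [Hl H]]]].
  - exact (Up_min w F H).
  - destruct (Up_step F) as [t Ht].
    destruct (realization_realizes F t _ (H _ _ (type_ext_prime F t)))
      as [x [C [Hx [HC HrkC]]]].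
    apply (Ht w v x); [split; assumption|exact Hx|].
    exact (Up_same_set v C _ HC (IH v h C HrkC)).
  - apply Up_limit; [split; assumption|]. intros v h. exact (IH v h F (H v h)).
Qed.
End Upper.

(* The realization of a prime extension (B, e) obtained by sending its new
   vertex b0 to a realizer x of the type of b0. *)
Section Realization.
Variables (F : list (tv X)) (B : tournament) (e : tv X -> tv B) (b0 : tv B) (x : tv X).
Hypothesis e_inj : forall y z, In y F -> In z F -> e y = e z -> y = z.
Hypothesis e_arr : forall y z, In y F -> In z F -> (tarr X y z <-> tarr B (e y) (e z)).
Hypothesis e_new : forall y, In y F -> e y <> b0.
Hypothesis e_onto : forall b, b <> b0 -> exists y, In y F /\ e y = b.
Hypothesis x_realizes : realizes F (fun y => tarr B b0 (e y)) x.

Definition realizing_map (b : tv B) : tv X :=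
  match excluded_middle_informative (b = b0) with
  | left _ => x
  | right hb => proj1_sig (constructive_indefinite_description _ (e_onto b hb))
  end.

Lemma realizing_map_new : realizing_map b0 = x.
Proof. unfold realizing_map. destruct (excluded_middle_informative (b0 = b0)); easy. Qed.

Lemma realizing_map_old b : b <> b0 -> In (realizing_map b) F /\ e (realizing_map b) = b.
Proof.
  intro hb. unfold realizing_map.
  destruct (excluded_middle_informative (b = b0)); [contradiction|]. apply proj2_sig.
Qed.

Lemma realizing_map_fix y : In y F -> realizing_map (e y) = y.
Proof.
  intro hy. destruct (realizing_map_old (e y) (e_new y hy)) as [h1 h2]. apply e_inj; auto.
Qed.

Lemma realizing_map_new_arr b : b <> b0 ->
  (tarr B b0 b <-> tarr X x (realizing_map b)) /\ (tarr B b b0 <-> tarr X (realizing_map b) x).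
Proof.
  intro hb. destruct x_realizes as [xF xt].
  destruct (realizing_map_old b hb) as [h1 h2].
  assert (hx : realizing_map b <> x) by (intros E; apply xF; rewrite <- E; exact h1).
  rewrite (xt _ h1), h2. split; [reflexivity|]. split; intro H.
  - destruct (tarr_total X x (realizing_map b) (not_eq_sym hx)) as [H'|H']; [|exact H'].
    rewrite (xt _ h1), h2 in H'. exfalso. exact (tarr_asym B _ _ H H').
  - destruct (tarr_total B b b0 hb) as [H'|H']; [exact H'|].
    exfalso. apply (tarr_asym X _ _ H). rewrite (xt _ h1), h2. exact H'.
Qed.

Lemma realized_by_realizer (P : list (tv X) -> Prop) :
  P (x :: F) -> realized_with X F B e P.
Proof.
  intro HP. destruct x_realizes as [xF _].
  exists realizing_map. split; [|split; [|split]].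
  - intros b b' E.
    destruct (classic (b = b0)) as [->|E1]; destruct (classic (b' = b0)) as [->|E2];
      [reflexivity| | |].
    + exfalso. apply xF. rewrite realizing_map_new in E. rewrite E.
      apply realizing_map_old; exact E2.
    + exfalso. apply xF. rewrite realizing_map_new in E. rewrite <- E.
      apply realizing_map_old; exact E1.
    + rewrite <- (proj2 (realizing_map_old b E1)), <- (proj2 (realizing_map_old b' E2)), E.
      reflexivity.
  - intros b b'.
    destruct (classic (b = b0)) as [->|E1]; destruct (classic (b' = b0)) as [->|E2];
      rewrite ?realizing_map_new.
    + split; intro H; exfalso; [exact (tarr_asym B _ _ H H)|exact (tarr_asym X _ _ H H)].
    + apply realizing_map_new_arr; exact E2.
    + apply realizing_map_new_arr; exact E1.
    + destruct (realizing_map_old b E1) as [h1 h2], (realizing_map_old b' E2) as [h1' h2'].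
      rewrite <- h2 at 1. rewrite <- h2' at 1. symmetry. apply e_arr; assumption.
  - exact realizing_map_fix.
  - exists (x :: F). split; [|exact HP]. intro y. split.
    + intros [<-|hy]; [exists b0; apply realizing_map_new|].
      exists (e y). apply realizing_map_fix; exact hy.
    + intros [b <-]. destruct (classic (b = b0)) as [->|E1].
      * left. symmetry. apply realizing_map_new.
      * right. apply realizing_map_old; exact E1.
Qed.
End Realization.

Section Lower.
Variable Lo : wo W -> list (tv X) -> Prop.
Hypothesis Lo_down : forall w v F, wlt W v w -> Lo w F -> Lo v F.
Hypothesis Lo_step : forall w v F, is_pred W v w -> Lo w F ->
  forall t : tv X -> Prop, exists x, realizes F t x /\ Lo v (x :: F).

Lemma rkge_lower_bound w F : Lo w F -> rkge X W w F.
Proof.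
  revert F. induction w as [w IH] using (well_founded_ind (wlt_wf W)).
  intros F HL. apply rkge_unfold.
  destruct (min_pred_limit W w) as [H|[[v Hp]|[Hex Hl]]].
  - left; exact H.
  - right; left. exists v, (proj1 Hp). split; [apply Hp|].
    intros B e [_ [einj [earr [b0 [Hb0 Hb]]]]].
    destruct (Lo_step w v F Hp HL (fun y => tarr B b0 (e y))) as [x [Hx Lx]].
    apply (realized_by_realizer F B e b0 x einj earr Hb0 Hb Hx).
    exact (IH v (proj1 Hp) _ Lx).
  - right; right. split; [exact Hex|split; [exact Hl|]].
    intros v h. exact (IH v h F (Lo_down w v F h HL)).
Qed.
End Lower.
End RankBounds.

Lemma rank_is_intro X W a :
  rkge X W a [] -> (forall b, rkge X W b [] -> wle W b a) -> rank_is X W a.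
Proof.
  intros Hlo Hup. split; [exact Hlo|].
  intros b Hab Hb. exact (wlt_not_wle W _ _ Hab (Hup b Hb)).
Qed.

Section SmallRank.
Variable W : wellorder.
Variable a : wo W.
Hypothesis a_lt_two : ~ two_le W a.

Definition below (u : wo W) := wlt W u a.

Lemma below_unique (u v : {u | below u}) : u = v.
Proof.
  destruct u as [u hu], v as [v hv].
  destruct (wlt_total W u v) as [E|[<-|E]].
  - exfalso. apply a_lt_two. exists u, v. auto.
  - f_equal. apply proof_irrelevance.
  - exfalso. apply a_lt_two. exists v, u. auto.
Qed.

Definition no_arr (u v : {u | below u}) : Prop := False.

Lemma no_arr_asym u v : no_arr u v -> ~ no_arr v u.
Proof. intros []. Qed.

Lemma no_arr_total u v : u <> v -> no_arr u v \/ no_arr v u.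
Proof. intro H. exfalso. exact (H (below_unique u v)). Qed.

(* The tournament with one vertex if a = 1 and none if a = 0. *)
Definition small_tournament : tournament :=
  Tournament {u | below u} no_arr no_arr_asym no_arr_total.

Lemma small_tournament_countable : countable_tournament small_tournament.
Proof. exists (fun _ => 0). intros u v _. apply below_unique. Qed.

Lemma small_tournament_rank : rank_is small_tournament W a.
Proof.
  apply rank_is_intro.
  - apply (rkge_lower_bound small_tournament W
             (fun w F => (F = [] /\ wle W w a) \/ is_min W w)).
    + intros w v F Hv [[-> Hw]|Hw].
      * left. split; [reflexivity|]. left. exact (wlt_wle_trans W _ _ _ Hv Hw).
      * exfalso. exact (Hw v Hv).
    + intros w v F Hp [[-> Hw]|Hw] t.
      * assert (Hv : below v) by exact (wlt_wle_trans W _ _ _ (proj1 Hp) Hw).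
        exists (exist _ v Hv). split; [split; [intros []|intros y []]|].
        right. intros u Hu. apply a_lt_two. exists u, v. auto.
      * exfalso. exact (Hw v (proj1 Hp)).
    + left. split; [reflexivity|right; reflexivity].
  - intros b Hb.
    apply (rkge_upper_bound small_tournament W
             (fun w F => ((forall y, ~ In y F) -> wle W w a) /\
                         ((exists y, In y F) -> is_min W w))) in Hb.
    + apply (proj1 Hb). intros y [].
    + intros w F G HFG [U1 U2]. split.
      * intro Hn. apply U1. intros y Hy. apply (Hn y), HFG, Hy.
      * intros [y Hy]. apply U2. exists y. apply HFG, Hy.
    + intros w F H. split; intros _; [apply min_wle|]; exact H.
    + intros w F Hl H. split; intro HF.
      * apply (le_plus_limit W (Some a) 0); [exact Hl|]. intros v Hv. exact (proj1 (H v Hv) HF).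
      * apply (le_plus_limit W None 0); [exact Hl|]. intros v Hv. exact (proj2 (H v Hv) HF).
    + intro F. exists (fun _ => True). intros w v x Hp [Hx _] [_ U2].
      assert (Hv : is_min W v) by (apply U2; exists x; left; reflexivity).
      split.
      * intros _. destruct (wlt_total W w a) as [E|[E|E]]; [left; exact E|right; exact E|].
        exfalso. destruct x as [u hu].
        destruct (proj2 Hp a E) as [<-|E2]; [exact (Hv u hu)|exact (Hv a E2)].
      * intros [y Hy]. exfalso. apply Hx. rewrite (below_unique x y). exact Hy.
Qed.
End SmallRank.

Section TreeOrder.
Variable W : wellorder.

Record entry : Type := Entry { pos : Z; label : option (wo W); bits : list bool }.

Fixpoint bits_lt (l1 l2 : list bool) : Prop :=
  match l1, l2 with
  | [], [] => False
  | [], _ :: _ => True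
  | _ :: _, [] => False
  | b1 :: l1', b2 :: l2' => (b1 = false /\ b2 = true) \/ (b1 = b2 /\ bits_lt l1' l2')
  end.

Definition label_lt (o1 o2 : option (wo W)) : Prop :=
  match o1, o2 with
  | None, Some _ => True
  | Some v1, Some v2 => wlt W v1 v2
  | _, _ => False
  end.

Definition entry_lt (e1 e2 : entry) : Prop :=
  (pos e1 < pos e2)%Z \/ (pos e1 = pos e2 /\ label_lt (label e1) (label e2)) \/
  (pos e1 = pos e2 /\ label e1 = label e2 /\ bits_lt (bits e1) (bits e2)).

Lemma bits_lt_irrefl l : ~ bits_lt l l.
Proof. induction l as [|b l IH]; simpl; [tauto|]. intros [[-> H]|[_ H]]; [discriminate|auto]. Qed.

Lemma bits_lt_trans l1 l2 l3 : bits_lt l1 l2 -> bits_lt l2 l3 -> bits_lt l1 l3.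
Proof.
  revert l2 l3. induction l1 as [|b1 l1 IH]; intros [|b2 l2] [|b3 l3]; simpl; try tauto.
  intros [[H1 H2]|[H1 H2]] [[H3 H4]|[H3 H4]]; subst; try congruence; eauto.
Qed.

Lemma bits_lt_total l1 l2 : l1 <> l2 -> bits_lt l1 l2 \/ bits_lt l2 l1.
Proof.
  revert l2. induction l1 as [|b1 l1 IH]; intros [|b2 l2] H; simpl; auto.
  destruct (Bool.bool_dec b1 b2) as [<-|E].
  - assert (Hl : l1 <> l2) by congruence. destruct (IH l2 Hl); auto.
  - destruct b1, b2; tauto.
Qed.

Lemma label_lt_irrefl o : ~ label_lt o o.
Proof. destruct o; simpl; auto. apply wlt_irrefl. Qed.

Lemma label_lt_trans o1 o2 o3 : label_lt o1 o2 -> label_lt o2 o3 -> label_lt o1 o3.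
Proof. destruct o1, o2, o3; simpl; try tauto. apply wlt_trans. Qed.

Lemma label_lt_total o1 o2 : o1 <> o2 -> label_lt o1 o2 \/ label_lt o2 o1.
Proof.
  destruct o1 as [v1|], o2 as [v2|]; simpl; intro H; auto.
  destruct (wlt_total W v1 v2) as [E|[E|E]]; auto. subst; tauto.
Qed.

Lemma entry_lt_irrefl e : ~ entry_lt e e.
Proof.
  intros [H|[[_ H]|[_ [_ H]]]].
  - lia.
  - exact (label_lt_irrefl _ H).
  - exact (bits_lt_irrefl _ H).
Qed.

Lemma entry_lt_trans e1 e2 e3 : entry_lt e1 e2 -> entry_lt e2 e3 -> entry_lt e1 e3.
Proof.
  unfold entry_lt.
  intros [H|[[H1 H]|[H1 [H2 H]]]] [H'|[[H1' H']|[H1' [H2' H']]]]; try (left; lia).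
  - right; left. split; [congruence|exact (label_lt_trans _ _ _ H H')].
  - right; left. split; [congruence|]. rewrite <- H2'. exact H.
  - right; left. split; [congruence|]. rewrite H2. exact H'.
  - right; right. split; [congruence|split; [congruence|exact (bits_lt_trans _ _ _ H H')]].
Qed.

Lemma entry_lt_asym e1 e2 : entry_lt e1 e2 -> ~ entry_lt e2 e1.
Proof. intros H H'. exact (entry_lt_irrefl e1 (entry_lt_trans _ _ _ H H')). Qed.

Lemma entry_lt_total e1 e2 : e1 <> e2 -> entry_lt e1 e2 \/ entry_lt e2 e1.
Proof.
  destruct e1 as [z1 o1 l1], e2 as [z2 o2 l2]; unfold entry_lt; simpl; intro H.
  destruct (Z.lt_trichotomy z1 z2) as [Hz|[<-|Hz]]; [left; left; exact Hz| |right; left; exact Hz].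
  destruct (classic (o1 = o2)) as [<-|Ho].
  - assert (Hl : l1 <> l2) by congruence.
    destruct (bits_lt_total l1 l2 Hl); [left|right]; right; right; auto.
  - destruct (label_lt_total o1 o2 Ho); [left|right]; right; left; auto.
Qed.

(* Bit i of the last entry of r gives the arrow from p ++ r to its ancestor
   at distance i + 1. *)
Definition beats_ancestor (r : list entry) : Prop :=
  nth (length r - 1) (bits (last r (Entry 0 None []))) false = true.

Fixpoint tree_arr (s t : list entry) : Prop :=
  match s, t with
  | [], [] => False
  | [], _ :: _ => ~ beats_ancestor t
  | _ :: _, [] => beats_ancestor s
  | e1 :: s', e2 :: t' => (e1 = e2 /\ tree_arr s' t') \/ (e1 <> e2 /\ entry_lt e1 e2)
  end.

Lemma tree_arr_asym s t : tree_arr s t -> ~ tree_arr t s.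
Proof.
  revert t. induction s as [|e1 s IH]; intros [|e2 t]; simpl; try tauto.
  intros [[<- H]|[E1 H]] [[E2 H']|[E2 H']].
  - exact (IH t H H').
  - congruence.
  - congruence.
  - exact (entry_lt_asym _ _ H H').
Qed.

Lemma tree_arr_total s t : s <> t -> tree_arr s t \/ tree_arr t s.
Proof.
  revert t. induction s as [|e1 s IH]; intros [|e2 t] H; simpl.
  - congruence.
  - destruct (classic (beats_ancestor (e2 :: t))); tauto.
  - destruct (classic (beats_ancestor (e1 :: s))); tauto.
  - destruct (classic (e1 = e2)) as [<-|E].
    + assert (Hst : s <> t) by congruence. destruct (IH t Hst); auto.
    + destruct (entry_lt_total e1 e2 E); [left|right]; right; auto.
Qed.

Lemma tree_arr_app p s t : tree_arr (p ++ s) (p ++ t) <-> tree_arr s t.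
Proof.
  induction p as [|e p IH]; simpl; [reflexivity|].
  rewrite IH. split; [intros [[_ H]|[H _]]; [exact H|congruence]|intro H; left; auto].
Qed.

Lemma tree_arr_diverge c c' s t : c <> c' -> (tree_arr (c :: s) (c' :: t) <-> entry_lt c c').
Proof.
  intro Hc; simpl; split; [intros [[H1 _]|[_ H]]; [congruence|exact H]|intro; right; auto].
Qed.

Lemma tree_arr_ancestor p r : r <> [] -> (tree_arr (p ++ r) p <-> beats_ancestor r).
Proof.
  intro Hr. rewrite <- (app_nil_r p) at 2. rewrite tree_arr_app.
  destruct r; [congruence|reflexivity].
Qed.

Definition prefix (s t : list entry) := exists q, t = s ++ q.

Lemma prefix_refl s : prefix s s.
Proof. exists []. rewrite app_nil_r. reflexivity. Qed.

Lemma prefix_trans s t u : prefix s t -> prefix t u -> prefix s u.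
Proof. intros [q1 ->] [q2 ->]. exists (q1 ++ q2). rewrite app_assoc. reflexivity. Qed.

Lemma prefix_length s t : prefix s t -> length s <= length t.
Proof. intros [q ->]. rewrite length_app. lia. Qed.

Lemma prefix_antisym s t : prefix s t -> prefix t s -> s = t.
Proof.
  intros Hst Hts. destruct Hst as [q ->]. apply prefix_length in Hts.
  rewrite length_app in Hts. destruct q; [symmetry; apply app_nil_r|simpl in Hts; lia].
Qed.

Lemma prefix_snoc y s e : prefix y (s ++ [e]) <-> prefix y s \/ y = s ++ [e].
Proof.
  split.
  - intros [q H]. induction q as [|c q _] using rev_ind.
    + right. rewrite app_nil_r in H. congruence.
    + rewrite app_assoc in H. apply app_inj_tail in H. destruct H as [-> _].
      left. exists q. reflexivity.
  - intros [[q ->]| ->]; [exists (q ++ [e]); rewrite app_assoc; reflexivity|apply prefix_refl].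
Qed.

Lemma prefix_or_diverge x d :
  prefix x d \/ prefix d x \/
  exists p c1 c2 x' d', x = p ++ c1 :: x' /\ d = p ++ c2 :: d' /\ c1 <> c2.
Proof.
  revert d. induction x as [|c x IH]; intros d.
  - left. exists d. reflexivity.
  - destruct d as [|c' d]; [right; left; exists (c :: x); reflexivity|].
    destruct (classic (c = c')) as [<-|E].
    + destruct (IH d) as [[q ->]|[[q ->]|[p [c1 [c2 [x' [d' [-> [-> H3]]]]]]]]].
      * left. exists q. reflexivity.
      * right; left. exists q. reflexivity.
      * right; right. exists (c :: p), c1, c2, x', d'. auto.
    + right; right. exists [], c, c', x, d. auto.
Qed.

Lemma diverge_ne (p y z : list entry) (c1 c2 : entry) : c1 <> c2 -> p ++ c1 :: y <> p ++ c2 :: z.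
Proof. intros Hc E. apply app_inv_head in E. congruence. Qed.

Lemma diverge_not_prefix_both p c1 c2 y z d : c1 <> c2 ->
  prefix (p ++ c1 :: y) d -> prefix (p ++ c2 :: z) d -> False.
Proof.
  intros Hc [q1 ->] [q2 H]. rewrite <- !app_assoc in H. apply app_inv_head in H.
  simpl in H. congruence.
Qed.

Lemma extension_not_prefix p c y : ~ prefix (p ++ c :: y) p.
Proof. intro H. apply prefix_length in H. rewrite length_app in H. simpl in H. lia. Qed.

(* Subtrees of siblings are ordered as the siblings, so a vertex x with
   y -> x -> z, for y, z branching at p, can sit neither in one of their
   subtrees nor beside them: it is an ancestor of the branching point. *)
Lemma cyclic_realizer_prefix p c1 c2 y z x : c1 <> c2 ->
  tree_arr (p ++ c1 :: y) (p ++ c2 :: z) -> tree_arr x (p ++ c1 :: y) ->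
  tree_arr (p ++ c2 :: z) x -> prefix x p.
Proof.
  intros Hc Hyz Hxy Hzx.
  rewrite tree_arr_app, tree_arr_diverge in Hyz by exact Hc.
  destruct (prefix_or_diverge x p) as [H|[[[|c q] ->]|[p0 [d1 [d2 [x' [p' [-> [-> E3]]]]]]]]].
  - exact H.
  - rewrite app_nil_r. apply prefix_refl.
  - exfalso. rewrite tree_arr_app in Hxy, Hzx.
    destruct (classic (c = c1)) as [->|Ec1]; [|destruct (classic (c = c2)) as [->|Ec2]].
    + apply (tree_arr_asym _ _ Hzx). apply tree_arr_diverge; auto.
    + apply (tree_arr_asym _ _ Hxy). apply tree_arr_diverge; auto.
    + rewrite tree_arr_diverge in Hxy, Hzx by auto.
      exact (entry_lt_irrefl c (entry_lt_trans _ _ _ Hxy (entry_lt_trans _ _ _ Hyz Hzx))).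
  - exfalso. rewrite <- !app_assoc in *. simpl in *.
    rewrite tree_arr_app in Hxy, Hzx.
    rewrite tree_arr_diverge in Hxy, Hzx by auto. exact (entry_lt_asym _ _ Hxy Hzx).
Qed.

(* The root [] of a tree of valid sequences from b carries the label b. *)
Definition node_label (b : wo W) (s : list entry) : option (wo W) :=
  label (last s (Entry 0 (Some b) [])).

Fixpoint valid_from (b : wo W) (s : list entry) : Prop :=
  match s with
  | [] => True
  | e :: s' => match label e with
               | None => s' = []
               | Some v => wlt W v b /\ two_le W v /\ valid_from v s'
               end
  end.

(* [node_le b s k w] says w <= h + k, where h is the label of s, and 1 if s is a leaf. *)
Definition node_le (b : wo W) (s : list entry) (k : nat) (w : wo W) : Prop :=
  match node_label b s with
  | Some c => le_plus W (Some c) k w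
  | None => le_plus W None (S k) w
  end.

Lemma node_le_down b s k w x : node_le b s k w -> wlt W x w -> node_le b s k x.
Proof. unfold node_le. destruct (node_label b s); apply le_plus_down. Qed.

Lemma node_le_succ b s k v w : node_le b s k v -> is_pred W v w -> node_le b s (S k) w.
Proof. unfold node_le. destruct (node_label b s); apply le_plus_succ. Qed.

Lemma node_label_app b c s r : r <> [] -> node_label b (s ++ r) = node_label c r.
Proof.
  intro Hr. unfold node_label. destruct (exists_last Hr) as [r0 [e ->]].
  rewrite app_assoc, !last_last. reflexivity.
Qed.

Lemma node_le_app b c s r k w : r <> [] -> node_le b (s ++ r) k w <-> node_le c r k w.
Proof. intro Hr. unfold node_le. rewrite (node_label_app b c s r Hr). reflexivity. Qed.

Lemma valid_split b s r : valid_from b (s ++ r) -> r <> [] ->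
  exists c, node_label b s = Some c /\ valid_from c r.
Proof.
  revert b. induction s as [|e s IH]; intros b H Hr.
  - exists b. auto.
  - simpl in H. destruct (label e) as [v|] eqn:Ev.
    + destruct H as [_ [_ H]]. destruct s as [|e' s].
      * exists v. unfold node_label. simpl. rewrite Ev. auto.
      * destruct (IH v H Hr) as [c [Hc Hcr]].
        exists c. split; [|exact Hcr]. rewrite <- Hc.
        exact (node_label_app b v [e] (e' :: s) ltac:(discriminate)).
    + exfalso. destruct r; [contradiction|]. apply app_eq_nil in H. destruct H; discriminate.
Qed.

Lemma valid_prefix b s r : valid_from b (s ++ r) -> valid_from b s.
Proof.
  revert b. induction s as [|e s IH]; intros b H; simpl in *; [exact I|].
  destruct (label e).
  - destruct H as [H1 [H2 H3]]. eauto.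
  - apply app_eq_nil in H. tauto.
Qed.

Lemma valid_node_label b s c : valid_from b s -> node_label b s = Some c -> s = [] \/ two_le W c.
Proof.
  intros H Hc. destruct s as [|e s] using rev_ind; [left; reflexivity|right].
  clear IHs. unfold node_label in Hc. rewrite last_last in Hc.
  destruct s as [|e0 s].
  - simpl in H. rewrite Hc in H. tauto.
  - destruct (valid_split b (e0 :: s) [e] H ltac:(discriminate)) as [c' [_ Hv]].
    simpl in Hv. rewrite Hc in Hv. tauto.
Qed.

Lemma valid_snoc b s c e : valid_from b s -> node_label b s = Some c ->
  match label e with None => True | Some v => wlt W v c /\ two_le W v end ->
  valid_from b (s ++ [e]).
Proof.
  revert b. induction s as [|e1 s IH]; intros b H Hc He.
  - unfold node_label in Hc. simpl in *. injection Hc as <-.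
    destruct (label e); [tauto|reflexivity].
  - simpl in H |- *. destruct (label e1) as [v1|] eqn:E1.
    + destruct H as [H1 [H2 H3]]. repeat split; auto. apply (IH v1); auto.
      destruct s as [|e2 s]; [unfold node_label in Hc |- *; simpl in *; congruence|].
      rewrite <- Hc. symmetry. exact (node_label_app b v1 [e1] (e2 :: s) ltac:(discriminate)).
    + subst s. unfold node_label in Hc. simpl in Hc. congruence.
Qed.

Lemma valid_leaf_sibling b p e e' : label e = None -> label e' = None ->
  valid_from b (p ++ [e]) -> valid_from b (p ++ [e']).
Proof.
  intros He He'. revert b. induction p as [|e1 p IH]; intros b H; simpl in *.
  - rewrite He'. reflexivity.
  - destruct (label e1); [|apply app_eq_nil in H; destruct H; discriminate].
    destruct H as [H1 [H2 H3]]. auto.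
Qed.

(* Going down r from a node of label c >= 2 costs one unit per step. *)
Lemma le_plus_descendant r c k v w : valid_from c r -> r <> [] -> two_le W c ->
  node_le c r (k + (length r - 1)) v -> is_pred W v w -> le_plus W (Some c) k w.
Proof.
  revert c k. induction r as [|e r IH]; intros c k Hv Hr Hc H Hp; [congruence|].
  simpl in Hv. destruct (label e) as [u|] eqn:Eu.
  - destruct Hv as [Huc [Hu Hv]].
    destruct r as [|e2 r].
    + unfold node_le, node_label in H. simpl in H. rewrite Eu, Nat.add_0_r in H.
      exact (le_plus_pred_lt_base W u c k v w Huc H Hp).
    + apply (le_plus_lt_base W u c k w Huc).
      apply (IH u (S k) Hv ltac:(discriminate) Hu); [|exact Hp].
      apply (node_le_app c u [e] (e2 :: r)) in H; [|discriminate].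
      simpl length in *.
      replace (S k + (S (length r) - 1)) with (k + (S (S (length r)) - 1)) by lia.
      exact H.
  - subst r. unfold node_le, node_label in H. simpl in H. rewrite Eu, Nat.add_0_r in H.
    exact (le_plus_pred_two_le W c k v w Hc H Hp).
Qed.

Fixpoint missing (M : list entry -> Prop) (p r : list entry) : nat :=
  match r with
  | [] => 0
  | c :: r' => (if excluded_middle_informative (M (p ++ [c])) then 0 else 1)
               + missing M (p ++ [c]) r'
  end.

Lemma missing_ext M M' p r : (forall s, M s <-> M' s) -> missing M p r = missing M' p r.
Proof.
  intro H. revert p. induction r as [|c r IH]; intro p; simpl; [reflexivity|].
  rewrite IH. destruct (excluded_middle_informative (M (p ++ [c])));
  destruct (excluded_middle_informative (M' (p ++ [c]))); firstorder.
Qed.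

Lemma missing_app M p r1 r2 : missing M p (r1 ++ r2) = missing M p r1 + missing M (p ++ r1) r2.
Proof.
  revert p. induction r1 as [|c r1 IH]; intro p; simpl.
  - rewrite app_nil_r. reflexivity.
  - rewrite IH, <- app_assoc. simpl. lia.
Qed.

Lemma missing_add_other M x p r : (forall q, p ++ q = x -> q = [] \/ ~ prefix q r) ->
  missing (fun s => s = x \/ M s) p r = missing M p r.
Proof.
  revert p. induction r as [|c r IH]; intros p H; simpl; [reflexivity|].
  rewrite IH.
  - f_equal. destruct (excluded_middle_informative (p ++ [c] = x \/ M (p ++ [c]))) as [[o|o]|o];
      destruct (excluded_middle_informative (M (p ++ [c]))) as [m|m]; try tauto.
    exfalso. destruct (H [c] o) as [H'|H']; [discriminate|]. apply H'. exists r. reflexivity.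
  - intros q Hq. rewrite <- app_assoc in Hq. destruct (H _ Hq) as [H'|H']; [discriminate|].
    right. intros [q' Hq']. apply H'. exists q'. simpl. congruence.
Qed.

Lemma missing_add_prefix M x p r q : x = p ++ q -> q <> [] -> prefix q r -> ~ M x ->
  missing M p r = S (missing (fun s => s = x \/ M s) p r).
Proof.
  revert p q. induction r as [|c r IH]; intros p q Hx Hq [q' Hr] HM.
  - destruct q; [congruence|discriminate].
  - destruct q as [|c' q]; [congruence|]. simpl in Hr. injection Hr as <- Hr'.
    simpl. destruct q as [|c2 q].
    + subst x. rewrite (missing_add_other M (p ++ [c]) (p ++ [c]) r).
      * destruct (excluded_middle_informative (M (p ++ [c]))) as [h|h]; [contradiction|].
        destruct (excluded_middle_informative (p ++ [c] = p ++ [c] \/ M (p ++ [c]))) as [h'|h'];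
          [lia|tauto].
      * intros q0 Hq0. left. rewrite <- app_nil_r in Hq0. apply app_inv_head in Hq0.
        exact Hq0.
    + rewrite (IH (p ++ [c]) (c2 :: q)); [| rewrite <- app_assoc; exact Hx|discriminate
        |exists q'; exact Hr'|exact HM].
      subst x.
      destruct (excluded_middle_informative (M (p ++ [c]))) as [h|h];
      destruct (excluded_middle_informative (p ++ [c] = p ++ c :: c2 :: q \/ M (p ++ [c])))
        as [[h'|h']|h']; try lia; try tauto.
      apply app_inv_head in h'. discriminate.
Qed.

Lemma missing_add_extension M p r : r <> [] -> (forall s, M s -> length s <= length p) ->
  missing (fun s => s = p ++ r \/ M s) p r = length r - 1.
Proof.
  revert p. induction r as [|c r IH]; intros p Hr HM; [congruence|].
  simpl. destruct r as [|c2 r].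
  - destruct (excluded_middle_informative (p ++ [c] = p ++ [c] \/ M (p ++ [c]))); [|tauto].
    reflexivity.
  - rewrite (missing_ext _ (fun s => s = (p ++ [c]) ++ c2 :: r \/ M s))
      by (intro s; rewrite <- app_assoc; reflexivity).
    rewrite IH; [|discriminate|intros s Hs; rewrite length_app; specialize (HM s Hs); lia].
    destruct (excluded_middle_informative (p ++ [c] = p ++ c :: c2 :: r \/ M (p ++ [c])))
      as [[h|h]|h].
    + apply app_inv_head in h. discriminate.
    + apply HM in h. rewrite length_app in h. simpl in h. lia.
    + simpl. lia.
Qed.

Lemma missing_le_app M p r1 r2 : missing M p r1 <= missing M p (r1 ++ r2).
Proof. rewrite missing_app. lia. Qed.

Definition holds (P : Prop) : bool := if excluded_middle_informative P then true else false.

(* Bit i records T at the prefix of s that is the ancestor at distance i + 1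
   of a child of s. *)
Definition type_bits (s : list entry) (T : list entry -> Prop) : list bool :=
  map (fun i => holds (T (firstn (length s - i) s))) (seq 0 (length s)).

Lemma type_bits_nth s T y q : s = y ++ q -> y <> [] ->
  (nth (length q) (type_bits s T) false = true <-> T y).
Proof.
  intros Hs Hy. unfold type_bits.
  assert (Hl : length q < length s)
    by (subst; rewrite length_app; destruct y; [congruence|simpl; lia]).
  set (f := fun i => holds (T (firstn (length s - i) s))).
  rewrite (nth_indep _ false (f 0)) by (rewrite length_map, length_seq; exact Hl).
  rewrite map_nth, seq_nth by exact Hl. unfold f. simpl.
  replace (length s - length q) with (length y) by (subst; rewrite length_app; lia).
  rewrite Hs, firstn_app, firstn_all, Nat.sub_diag. simpl. rewrite app_nil_r.
  unfold holds. destruct (excluded_middle_informative (T y)); split; congruence || tauto.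
Qed.

Lemma child_arr_ancestor p y q z L T : p = y ++ q -> y <> [] ->
  (tree_arr (p ++ [Entry z L (type_bits p T)]) y <-> T y).
Proof.
  intros Hp Hy. rewrite <- (type_bits_nth p T y q Hp Hy).
  rewrite Hp at 1. rewrite <- app_assoc, tree_arr_ancestor by (destruct q; discriminate).
  unfold beats_ancestor. rewrite last_last, length_app. simpl.
  replace (length q + 1 - 1) with (length q) by lia. reflexivity.
Qed.

End TreeOrder.

Arguments Entry {W}.
Arguments pos {W}.
Arguments label {W}.
Arguments bits {W}.

Section TreeTournament.
Variable W : wellorder.
Variable a : wo W.
Hypothesis a_two_le : two_le W a.

Notation entry := (entry W).
Notation prefix := (prefix W).

Definition tree_vertex : Type := {s : list entry | s <> [] /\ valid_from W a s}.

Definition node (x : tree_vertex) : list entry := proj1_sig x.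

Lemma node_inj x y : node x = node y -> x = y.
Proof.
  destruct x as [s hs], y as [t ht]. unfold node; simpl. intros <-.
  rewrite (proof_irrelevance _ hs ht). reflexivity.
Qed.

Lemma node_nonempty x : node x <> [].
Proof. exact (proj1 (proj2_sig x)). Qed.

Lemma node_valid x : valid_from W a (node x).
Proof. exact (proj2 (proj2_sig x)). Qed.

Definition tree_vertex_arr (x y : tree_vertex) : Prop := tree_arr W (node x) (node y).

Lemma tree_vertex_arr_asym x y : tree_vertex_arr x y -> ~ tree_vertex_arr y x.
Proof. apply tree_arr_asym. Qed.

Lemma tree_vertex_arr_total x y : x <> y -> tree_vertex_arr x y \/ tree_vertex_arr y x.
Proof. intro H. apply tree_arr_total. intro E. exact (H (node_inj x y E)). Qed.

Definition tree_tournament : tournament :=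
  Tournament tree_vertex tree_vertex_arr tree_vertex_arr_asym tree_vertex_arr_total.

Lemma node_label_two_le s c : valid_from W a s -> node_label W a s = Some c -> two_le W c.
Proof.
  intros Hs Hc. destruct (valid_node_label W a s c Hs Hc) as [->|H]; [|exact H].
  injection Hc as <-. exact a_two_le.
Qed.

Definition node_in (F : list tree_vertex) (s : list entry) : Prop := In s (map node F).

Lemma node_in_cons x F s : node_in (x :: F) s <-> s = node x \/ node_in F s.
Proof. unfold node_in; simpl. split; intros [H|H]; auto. Qed.

Lemma node_in_of_In F f : In f F -> node_in F (node f).
Proof. apply in_map. Qed.

Lemma node_in_inv F s : node_in F s -> exists f, In f F /\ node f = s.
Proof. intro H. apply in_map_iff in H. destruct H as [f [<- H]]. eauto. Qed.

Lemma node_in_notin F x : ~ In x F -> ~ node_in F (node x).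
Proof.
  intros H H'. destruct (node_in_inv F _ H') as [f [Hf E]]. apply node_inj in E. subst. auto.
Qed.

Definition missing_in (F : list tree_vertex) (d : list entry) : nat := missing W (node_in F) [] d.

Lemma missing_in_cons x F d :
  missing_in (x :: F) d = missing W (fun s => s = node x \/ node_in F s) [] d.
Proof. apply missing_ext. intro s. apply node_in_cons. Qed.

Definition chain_top (F : list tree_vertex) (d : list entry) : Prop :=
  (d = [] \/ node_in F d) /\ forall s, node_in F s -> prefix s d.

Definition branches_at (F : list tree_vertex) (p : list entry) : Prop :=
  exists c1 c2 y z, node_in F (p ++ c1 :: y) /\ node_in F (p ++ c2 :: z) /\ c1 <> c2.

Lemma chain_top_unique F d d' : chain_top F d -> chain_top F d' -> d = d'.
Proof.
  assert (H : forall d d', chain_top F d -> chain_top F d' -> prefix d d').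
  { intros e e' [[->|He] _] [_ He']; [exists e'; reflexivity|exact (He' e He)]. }
  intros Hd Hd'. apply prefix_antisym; apply H; assumption.
Qed.

Lemma chain_top_exists F : (forall p, ~ branches_at F p) -> exists d, chain_top F d.
Proof.
  induction F as [|x F IH]; intro HF.
  - exists []. split; [left; reflexivity|]. intros s [].
  - destruct IH as [d [Hd Hmax]].
    { intros p [c1 [c2 [y [z [Hy [Hz Hc]]]]]]. apply (HF p).
      exists c1, c2, y, z. rewrite !node_in_cons. auto. }
    destruct (prefix_or_diverge W (node x) d)
      as [Hxd|[Hdx|[p [c1 [c2 [x' [d' [Ex [Ed Hc]]]]]]]]].
    + exists d. split; [destruct Hd as [Hd|Hd]; [left|right; apply node_in_cons]; auto|].
      intros s Hs. apply node_in_cons in Hs. destruct Hs as [->|Hs]; auto.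
    + exists (node x). split; [right; apply node_in_cons; auto|].
      intros s Hs. apply node_in_cons in Hs.
      destruct Hs as [->|Hs]; [apply prefix_refl|exact (prefix_trans W _ _ _ (Hmax s Hs) Hdx)].
    + exfalso. destruct Hd as [->|Hd]; [destruct p; discriminate|].
      apply (HF p). exists c1, c2, x', d'. rewrite !node_in_cons, <- Ex, <- Ed. auto.
Qed.

Definition rank_ub (w : wo W) (F : list tree_vertex) : Prop :=
  (forall d, chain_top F d -> node_le W a d (missing_in F d) w) /\
  (forall p, branches_at F p -> le_plus W None (missing_in F p) w).

Lemma rank_ub_same_set w F G : same_set tree_tournament F G -> rank_ub w F -> rank_ub w G.
Proof.
  intros H [U1 U2].
  assert (HM : forall s, node_in F s <-> node_in G s).
  { intro s; split; intro Hs; destruct (node_in_inv _ _ Hs) as [f [Hf <-]];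
      apply node_in_of_In, H, Hf. }
  assert (HC : forall d, missing_in F d = missing_in G d) by (intro d; apply missing_ext, HM).
  split.
  - intros d [Hd1 Hd2]. rewrite <- HC. apply U1. split; [rewrite HM; exact Hd1|].
    intros s Hs. apply Hd2, HM, Hs.
  - intros p [c1 [c2 [y [z [Hy [Hz Hc]]]]]]. rewrite <- HC.
    apply U2. exists c1, c2, y, z. rewrite !HM. auto.
Qed.

Lemma rank_ub_min w F : is_min W w -> rank_ub w F.
Proof.
  intro H. split; intros d _; [unfold node_le; destruct (node_label W a d)|]; apply le_plus_min, H.
Qed.

Lemma rank_ub_limit w F : is_limit W w -> (forall v, wlt W v w -> rank_ub v F) -> rank_ub w F.
Proof.
  intros Hl H. split.
  - intros d Hd. unfold node_le. destruct (node_label W a d) eqn:E;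
      apply le_plus_limit; auto; intros v Hv; generalize (proj1 (H v Hv) d Hd);
      unfold node_le; rewrite E; auto.
  - intros p Hp. apply le_plus_limit; [exact Hl|]. intros v Hv. exact (proj2 (H v Hv) p Hp).
Qed.

Lemma branches_at_cons x F p : branches_at F p -> branches_at (x :: F) p.
Proof.
  intros [c1 [c2 [y [z [Hy [Hz Hc]]]]]]. exists c1, c2, y, z. rewrite !node_in_cons. auto.
Qed.

Lemma least_branching F : (exists p, branches_at F p) ->
  exists p, branches_at F p /\ forall p', branches_at F p' -> missing_in F p <= missing_in F p'.
Proof.
  intros [p0 Hp0].
  destruct (dec_inh_nat_subset_has_unique_least_element
              (fun n => exists p, branches_at F p /\ missing_in F p = n))
    as [n [[[p [Hp <-]] Hmin] _]].
  - intro n. apply classic.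
  - exists (missing_in F p0). eauto.
  - exists p. split; [exact Hp|]. intros p' Hp'. apply Hmin. eauto.
Qed.

Lemma branches_at_oriented F p : branches_at F p ->
  exists c1 c2 y z, node_in F (p ++ c1 :: y) /\ node_in F (p ++ c2 :: z) /\ c1 <> c2 /\
    tree_arr W (p ++ c1 :: y) (p ++ c2 :: z).
Proof.
  intros [c1 [c2 [y [z [Hy [Hz Hc]]]]]].
  destruct (tree_arr_total W _ _ (diverge_ne W p y z c1 c2 Hc)) as [H|H].
  - exists c1, c2, y, z. auto.
  - exists c2, c1, z, y. auto.
Qed.

(* Take the branching point p with the fewest missing prefixes and the
   cyclic type over the two branches: its realizer is a missing prefix of p. *)
Lemma rank_ub_step_branching F : (exists p, branches_at F p) ->
  exists t : tree_vertex -> Prop, forall w v x, is_pred W v w ->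
    realizes tree_tournament F t x -> rank_ub v (x :: F) -> rank_ub w F.
Proof.
  intro HF.
  destruct (least_branching F HF) as [p [Hp Hmin]].
  destruct (branches_at_oriented F p Hp) as [c1 [c2 [y [z [Hy [Hz [Hc Hyz]]]]]]].
  destruct (node_in_inv F _ Hy) as [fy [Hfy Efy]].
  destruct (node_in_inv F _ Hz) as [fz [Hfz Efz]].
  exists (fun f => f = fy).
  intros w v x Hpv [Hx Hr] [_ U2].
  assert (Hxy : tree_arr W (node x) (p ++ c1 :: y)).
  { rewrite <- Efy. apply (Hr fy Hfy). reflexivity. }
  assert (Hzx : tree_arr W (p ++ c2 :: z) (node x)).
  { rewrite <- Efz.
    assert (Hxz : x <> fz) by (intros ->; exact (Hx Hfz)).
    destruct (tree_vertex_arr_total x fz Hxz) as [H|H]; [|exact H].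
    apply (Hr fz Hfz) in H. subst fz. exfalso.
    apply (diverge_ne W p y z c1 c2 Hc). congruence. }
  assert (Hcnt : missing_in F p = S (missing_in (x :: F) p)).
  { rewrite missing_in_cons.
    apply (missing_add_prefix W (node_in F) (node x) [] p (node x)); [reflexivity| | |].
    - apply node_nonempty.
    - exact (cyclic_realizer_prefix W p c1 c2 y z (node x) Hc Hyz Hxy Hzx).
    - apply node_in_notin, Hx. }
  split.
  - intros d [_ Hd]. exfalso.
    exact (diverge_not_prefix_both W p c1 c2 y z d Hc (Hd _ Hy) (Hd _ Hz)).
  - intros p' Hp'. apply (le_plus_mono W None (missing_in F p)); [exact (Hmin p' Hp')|].
    rewrite Hcnt. apply (le_plus_succ W _ _ v); [|exact Hpv].
    apply U2, branches_at_cons, Hp.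
Qed.

Section ChainStep.
Variables (F : list tree_vertex) (d : list entry) (x : tree_vertex) (v w : wo W).
Hypothesis d_top : chain_top F d.
Hypothesis x_new : ~ In x F.
Hypothesis x_ub : rank_ub v (x :: F).
Hypothesis v_pred : is_pred W v w.

Lemma chain_step_below : prefix (node x) d -> node_le W a d (missing_in F d) w.
Proof.
  intros [q Hq]. destruct d_top as [Hd Hmax].
  assert (Hcnt : missing_in F d = S (missing_in (x :: F) d)).
  { rewrite missing_in_cons.
    apply (missing_add_prefix W (node_in F) (node x) [] d (node x)); [reflexivity| | |].
    - apply node_nonempty.
    - exists q. exact Hq.
    - apply node_in_notin, x_new. }
  rewrite Hcnt. apply (node_le_succ W _ _ _ v); [|exact v_pred].
  apply (proj1 x_ub). split.
  - destruct Hd as [Hd|Hd]; [left; exact Hd|right; apply node_in_cons; auto].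
  - intros s Hs. apply node_in_cons in Hs. destruct Hs as [->|Hs]; [exists q; exact Hq|auto].
Qed.

Lemma missing_in_extension r : node x = d ++ r -> r <> [] ->
  missing_in (x :: F) (node x) = missing_in F d + (length r - 1).
Proof.
  intros Hx Hr. destruct d_top as [_ Hmax].
  rewrite missing_in_cons, Hx, missing_app.
  rewrite (missing_add_other W (node_in F) (d ++ r) [] d).
  - change ([] ++ d) with d.
    rewrite (missing_add_extension W (node_in F) d r Hr); [reflexivity|].
    intros s Hs. exact (prefix_length W _ _ (Hmax s Hs)).
  - intros q Hq. simpl in Hq. subst q. right. intro H. apply prefix_length in H.
    rewrite length_app in H. destruct r; [congruence|simpl in H; lia].
Qed.

Lemma chain_step_above r : node x = d ++ r -> node_le W a d (missing_in F d) w.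
Proof.
  intro Hx. destruct d_top as [Hd Hmax].
  assert (Hr : r <> []).
  { intros ->. rewrite app_nil_r in Hx. destruct Hd as [->|Hd].
    - exact (node_nonempty x Hx).
    - apply (node_in_notin F x x_new). rewrite Hx. exact Hd. }
  pose proof (node_valid x) as Hv. rewrite Hx in Hv.
  destruct (valid_split W a d r Hv Hr) as [c [Hc Hcr]].
  assert (Hc2 : two_le W c) by exact (node_label_two_le d c (valid_prefix W a d r Hv) Hc).
  assert (Htop : chain_top (x :: F) (node x)).
  { split; [right; apply node_in_cons; auto|].
    intros s Hs. apply node_in_cons in Hs. destruct Hs as [->|Hs]; [apply prefix_refl|].
    apply (prefix_trans W _ d); [exact (Hmax s Hs)|]. exists r. exact Hx. }
  pose proof (proj1 x_ub _ Htop) as H.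
  rewrite (missing_in_extension r Hx Hr), Hx in H.
  apply (node_le_app W a c d r _ _ Hr) in H.
  unfold node_le. rewrite Hc. exact (le_plus_descendant W r c _ v w Hcr Hr Hc2 H v_pred).
Qed.

Lemma chain_step_beside p c1 c2 x' d' : node x = p ++ c1 :: x' -> d = p ++ c2 :: d' -> c1 <> c2 ->
  node_le W a d (missing_in F d) w.
Proof.
  intros Ex Ed Hc. destruct d_top as [[Hd|Hd] _]; [subst d; destruct p; discriminate|].
  assert (Hv : le_plus W None (missing_in (x :: F) p) v).
  { apply (proj2 x_ub). exists c1, c2, x', d'. rewrite !node_in_cons, <- Ex, <- Ed. auto. }
  assert (Hp : missing_in (x :: F) p = missing_in F p).
  { rewrite missing_in_cons. apply missing_add_other. intros q Hq. simpl in Hq. subst q.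
    right. rewrite Ex. apply extension_not_prefix. }
  assert (Hpd : missing_in F p <= missing_in F d) by (rewrite Ed; apply missing_le_app).
  rewrite Hp in Hv.
  assert (Hv' : le_plus W None (S (missing_in F d)) v)
    by exact (le_plus_mono W _ _ _ _ (le_S _ _ Hpd) Hv).
  unfold node_le. destruct (node_label W a d) as [c|] eqn:Hc'.
  - destruct (node_in_inv F d Hd) as [f [_ Ef]].
    assert (Hc2 : two_le W c)
      by (rewrite <- Ef in Hc'; exact (node_label_two_le _ c (node_valid f) Hc')).
    exact (le_plus_pred_two_le W c _ v w Hc2 Hv' v_pred).
  - apply (le_plus_succ W _ _ v); [|exact v_pred].
    exact (le_plus_mono W _ _ _ _ Hpd Hv).
Qed.
End ChainStep.

(* Over a chain any new vertex lowers the bound: the type does not matter. *)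
Lemma rank_ub_step_chain F : (forall p, ~ branches_at F p) ->
  exists t : tree_vertex -> Prop, forall w v x, is_pred W v w ->
    realizes tree_tournament F t x -> rank_ub v (x :: F) -> rank_ub w F.
Proof.
  intro HF. destruct (chain_top_exists F HF) as [d Hd].
  exists (fun _ => True). intros w v x Hp [Hx _] Hub. split.
  - intros d0 Hd0. rewrite <- (chain_top_unique F d d0 Hd Hd0).
    destruct (prefix_or_diverge W (node x) d)
      as [H|[[r H]|[p [c1 [c2 [x' [d' [Ex [Ed Hc]]]]]]]]].
    + eapply chain_step_below; eassumption.
    + eapply chain_step_above; eassumption.
    + eapply chain_step_beside; eassumption.
  - intros p Hbr. exfalso. exact (HF p Hbr).
Qed.

Lemma tree_rank_upper w F : rkge tree_tournament W w F -> rank_ub w F.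
Proof.
  apply rkge_upper_bound.
  - apply rank_ub_same_set.
  - apply rank_ub_min.
  - apply rank_ub_limit.
  - intro F'. destruct (classic (exists p, branches_at F' p)) as [H|H].
    + exact (rank_ub_step_branching F' H).
    + apply rank_ub_step_chain. intros p Hp. exact (H (ex_intro _ p Hp)).
Qed.

Definition rank_lb (w : wo W) (F : list tree_vertex) : Prop :=
  (exists s, valid_from W a s /\ (forall y, node_in F y <-> y <> [] /\ prefix y s) /\
     node_le W a s 0 w) \/ is_min W w.

Lemma rank_lb_down w v F : wlt W v w -> rank_lb w F -> rank_lb v F.
Proof.
  intros Hv [[s [Hs [HF Hw]]]|Hw].
  - left. exists s. repeat split; try apply HF; auto. exact (node_le_down W _ _ _ _ _ Hw Hv).
  - exfalso. exact (Hw v Hv).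
Qed.

Definition mk_vertex (s : list entry) (h1 : s <> []) (h2 : valid_from W a s) : tree_vertex :=
  exist _ s (conj h1 h2).

Definition type_seq (F : list tree_vertex) (t : tree_vertex -> Prop) (y : list entry) : Prop :=
  exists f, In f F /\ node f = y /\ t f.

Lemma type_seq_node F t f : In f F -> (type_seq F t (node f) <-> t f).
Proof.
  intro Hf. split; [|intro; exists f; auto].
  intros [f' [_ [E H]]]. apply node_inj in E. subst. exact H.
Qed.

Definition child_label (v : wo W) : option (wo W) :=
  if excluded_middle_informative (two_le W v) then Some v else None.

Section Realizers.
Variables (F : list tree_vertex) (s : list entry) (t : tree_vertex -> Prop).
Hypothesis s_valid : valid_from W a s.
Hypothesis F_chain : forall y, node_in F y <-> y <> [] /\ prefix y s.

Lemma child_step v c : node_label W a s = Some c -> wlt W v c ->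
  exists x, realizes tree_tournament F t x /\ rank_lb v (x :: F).
Proof.
  intros Hc Hvc.
  set (e := Entry 0 (child_label v) (type_bits W s (type_seq F t))).
  assert (h1 : s ++ [e] <> []) by (destruct s; discriminate).
  assert (h2 : valid_from W a (s ++ [e])).
  { apply (valid_snoc W a s c e s_valid Hc). unfold e, child_label; simpl.
    destruct (excluded_middle_informative (two_le W v)); auto. }
  exists (mk_vertex (s ++ [e]) h1 h2). split; [split|].
  - intro Hx. apply node_in_of_In, F_chain in Hx. destruct Hx as [_ Hx].
    apply prefix_length in Hx. simpl in Hx. rewrite length_app in Hx. simpl in Hx. lia.
  - intros f Hf. rewrite <- (type_seq_node F t f Hf).
    destruct (proj1 (F_chain _) (node_in_of_In F f Hf)) as [Hf1 [q Hq]].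
    exact (child_arr_ancestor W s (node f) q 0 _ _ Hq Hf1).
  - left. exists (s ++ [e]). split; [exact h2|split].
    + intro y. rewrite node_in_cons, F_chain, prefix_snoc. simpl.
      split; [intros [->|[Hy1 Hy2]]; auto|intros [Hy1 [Hy2| ->]]; auto].
    + unfold node_le. rewrite (node_label_app W a a s [e]) by discriminate.
      unfold node_label, e, child_label; simpl.
      destruct (excluded_middle_informative (two_le W v)) as [H|H].
      * right; reflexivity.
      * exact (le_plus_one W v H).
Qed.
Lemma sibling_step p es v : s = p ++ [es] -> label es = None -> is_min W v ->
  exists x, realizes tree_tournament F t x /\ rank_lb v (x :: F).
Proof.
  intros Hs Hes Hv.
  set (T := type_seq F t).
  set (z := if excluded_middle_informative (T s) then (pos es - 1)%Z else (pos es + 1)%Z).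
  set (e := Entry z (@None (wo W)) (type_bits W p T)).
  assert (h1 : p ++ [e] <> []) by (destruct p; discriminate).
  assert (h2 : valid_from W a (p ++ [e])).
  { rewrite Hs in s_valid. exact (valid_leaf_sibling W a p es e Hes eq_refl s_valid). }
  assert (Hne : e <> es).
  { intro E. assert (Hz : z = pos es) by (rewrite <- E; reflexivity).
    unfold z in Hz. destruct (excluded_middle_informative (T s)); lia. }
  exists (mk_vertex (p ++ [e]) h1 h2). split; [split|right; exact Hv].
  - intro Hx. apply node_in_of_In, F_chain in Hx. destruct Hx as [_ Hx].
    change (prefix (p ++ [e]) s) in Hx. rewrite Hs, prefix_snoc in Hx. destruct Hx as [Hx|Hx].
    + apply prefix_length in Hx. rewrite length_app in Hx. simpl in Hx. lia.
    + apply app_inj_tail in Hx. exact (Hne (proj2 Hx)).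
  - intros f Hf. rewrite <- (type_seq_node F t f Hf). fold T.
    change (tree_arr W (p ++ [e]) (node f) <-> T (node f)).
    destruct (proj1 (F_chain _) (node_in_of_In F f Hf)) as [Hf1 Hf2].
    rewrite Hs, prefix_snoc in Hf2. destruct Hf2 as [[q Hq]|Hf2].
    + exact (child_arr_ancestor W p (node f) q z None T Hq Hf1).
    + rewrite Hf2, tree_arr_app, tree_arr_diverge by exact Hne. rewrite <- Hs.
      unfold entry_lt, e, z; simpl.
      destruct (excluded_middle_informative (T s)); split; intro H; try tauto; try lia.
Qed.
End Realizers.

Lemma rank_lb_step w v F : is_pred W v w -> rank_lb w F ->
  forall t, exists x, realizes tree_tournament F t x /\ rank_lb v (x :: F).
Proof.
  intros Hp [[s [Hs [HF Hw]]]|Hw] t; [|exfalso; exact (Hw v (proj1 Hp))].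
  unfold node_le in Hw. destruct (node_label W a s) as [c|] eqn:Hc.
  - exact (child_step F s t Hs HF v c Hc (wlt_wle_trans W _ _ _ (proj1 Hp) Hw)).
  - assert (Hsne : s <> []) by (intros ->; discriminate Hc).
    destruct (exists_last Hsne) as [p [es Es]].
    apply (sibling_step F s t Hs HF p es v Es); [|exact (Hw v (proj1 Hp))].
    unfold node_label in Hc. rewrite Es, last_last in Hc. exact Hc.
Qed.

Lemma tree_rank_lower w F : rank_lb w F -> rkge tree_tournament W w F.
Proof. apply rkge_lower_bound; [exact rank_lb_down|exact rank_lb_step]. Qed.

Lemma tree_tournament_rank : rank_is tree_tournament W a.
Proof.
  apply rank_is_intro.
  - apply tree_rank_lower. left. exists []. split; [exact I|split].
    + intro y. split; [intros []|intros [Hy [q Hq]]; destruct y; [contradiction|discriminate]].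
    + right. reflexivity.
  - intros b Hb. apply (proj1 (tree_rank_upper b [] Hb) []).
    split; [left; reflexivity|intros s []].
Qed.
End TreeTournament.

Definition countable (A : Type) := exists f : A -> nat, forall x y, f x = f y -> x = y.

Lemma countable_inj A B (g : A -> B) :
  (forall x y, g x = g y -> x = y) -> countable B -> countable A.
Proof. intros Hg [f Hf]. exists (fun x => f (g x)). intros x y E. exact (Hg x y (Hf _ _ E)). Qed.

Lemma countable_nat : countable nat.
Proof. exists (fun n => n). auto. Qed.

Lemma countable_prod A B : countable A -> countable B -> countable (A * B).
Proof.
  intros [f Hf] [g Hg]. exists (fun p => Cantor.to_nat (f (fst p), g (snd p))).
  intros [x1 y1] [x2 y2] E. apply Cantor.to_nat_inj in E. injection E as E1 E2.
  rewrite (Hf _ _ E1), (Hg _ _ E2). reflexivity.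
Qed.

Lemma countable_option A : countable A -> countable (option A).
Proof.
  intros [f Hf]. exists (fun o => match o with None => 0 | Some x => S (f x) end).
  intros [x|] [y|] E; try discriminate; [|reflexivity].
  injection E as E. rewrite (Hf _ _ E). reflexivity.
Qed.

Fixpoint list_code {A} (f : A -> nat) (l : list A) : nat :=
  match l with [] => 0 | x :: l' => S (Cantor.to_nat (f x, list_code f l')) end.

Lemma countable_list A : countable A -> countable (list A).
Proof.
  intros [f Hf]. exists (list_code f).
  induction x as [|x l IH]; intros [|y l'] E; try discriminate; [reflexivity|].
  cbn [list_code] in E. apply eq_add_S, Cantor.to_nat_inj in E. injection E as E1 E2.
  rewrite (Hf _ _ E1), (IH _ E2). reflexivity.
Qed.

Lemma countable_bool : countable bool.
Proof. exists (fun b : bool => if b then 1 else 0). intros [|] [|] E; easy. Qed.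

Lemma countable_Z : countable Z.
Proof.
  apply (countable_inj Z (nat * nat) (fun z => (Z.to_nat z, Z.to_nat (- z)))).
  - intros z1 z2 E. injection E as E1 E2. lia.
  - apply countable_prod; apply countable_nat.
Qed.

Lemma tree_tournament_countable W a :
  countable (wo W) -> countable_tournament (tree_tournament W a).
Proof.
  intro HW. apply (countable_inj _ _ (node W a) (node_inj W a)).
  apply countable_list.
  apply (countable_inj _ _ (fun e : entry W => (pos e, label e, bits e))).
  - intros [z1 o1 l1] [z2 o2 l2] E. simpl in E. congruence.
  - apply countable_prod; [apply countable_prod|];
      auto using countable_Z, countable_option, countable_list, countable_bool.
Qed.

Theorem corollary5p14 :
  forall (W : wellorder) (a : wo W),
    countable_wellorder W ->
    (exists b, wlt W a b) ->
    exists X : tournament, countable_tournament X /\ rank_is X W a.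
Proof.
  intros W a HW _.
  destruct (classic (two_le W a)) as [Ha|Ha].
  - exists (tree_tournament W a). split.
    + exact (tree_tournament_countable W a HW).
    + exact (tree_tournament_rank W a Ha).
  - exists (small_tournament W a Ha). split.
    + exact (small_tournament_countable W a Ha).
    + exact (small_tournament_rank W a Ha).
Qed.
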